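(* Let $\{G_n^\circ\}_{n\ge1}$ be an $H$-linear family of graphs with spiders, and let $a_n=\Gamma_{G_n^\circ}(1)/\mathcal{E}_{G_n^\circ}(1)$. If $\lim_{n\to\infty}a_n=0$, then $$\lim_{n\to\infty}\sup_{x\in\mathbb{R}}\Big|\sum_{0\le i\le x}\frac{\varepsilon_i(G_n^\circ)}{\mathcal{E}_{G_n^\circ}(1)}-\sum_{0\le i\le x}\frac{\tilde\gamma_i(G_n^\circ)}{\tilde\Gamma_{G_n^\circ}(1)}\Big|=0;$$ in particular the limits of the crosscap-number distributions of $G_n^\circ$ are the same as those of the Euler-genus distributions.
   Context: Embeddings are cellular embeddings in closed surfaces counted via general rotation systems up to equivalence. $\gamma_k(G)$, $\tilde\gamma_j(G)$, $\varepsilon_i(G)$ denote the numbers of embeddings of $G$ into the orientable surface of genus $k$, the non-orientable surface with $j$ crosscaps, and surfaces of Euler-genus $i$ (Euler-genus $2k$ for the orientable genus-$k$ surface, $j$ for $j$ crosscaps); $\Gamma_G(x)=\sum\gamma_kx^k$, $\tilde\Gamma_G(x)=\sum\tilde\gamma_jx^j$, $\mathcal{E}_G(x)=\sum\varepsilon_ix^i$. $H$-linear family with spiders: $H$ is a connected graph with disjoint vertex sets $\{u_1,\dots,u_s\}$, $\{v_1,\dots,v_s\}$; $H_i$ copies of $H$ with $u_{i,j},v_{i,j}$ the copies of $u_j,v_j$; $G_1=H_1$ and $G_n$ is obtained from $G_{n-1}$ and $H_n$ by identifying $v_{n-1,j}$ with $u_{n,j}$ for all $j$; $G_n^\circ$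 is obtained from $G_n$ by attaching fixed rooted graphs (spiders) at some of the vertices $u_{1,i}$ and $v_{n,i}$ by identifying them with root vertices of the spiders. *)

From HB Require Import structures.
From mathcomp Require Import all_boot all_order all_algebra fingroup perm.
From mathcomp Require Import all_classical all_reals all_analysis.

Set Implicit Arguments.
Unset Strict Implicit.
Unset Printing Implicit Defensive.

Import Order.TTheory GRing.Theory Num.Theory.

(* General (multi)graphs: finite vertex type, finite edge type, and    *)
(* for each edge its (ordered) pair of endpoints; loops and parallel   *)
(* edges are allowed.                                                  *)
Record graph := Graph {
  gV : finType;
  gEd : finType;
  gend : gEd -> gV * gV }.

Definition gadj (G : graph) : rel (gV G) :=
  fun x y => [exists e : gEd G, (gend e == (x, y)) || (gend e == (y, x))].

Definition gconnected (G : graph) : Prop :=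
  forall x y : gV G, connect (@gadj G) x y.

Section Embeddings.
Variable G : graph.

(* darts = half-edges: (e, false) is the end at (gend e).1,
   (e, true) the end at (gend e).2 *)
Definition dart := (gEd G * bool)%type.
Definition dv (d : dart) : gV G := if d.2 then (gend d.1).2 else (gend d.1).1.
Definition dalpha (d : dart) : dart := (d.1, ~~ d.2).

(* a general rotation system: a permutation of darts whose cycles are
   exactly the local rotations at the vertices, plus an edge signature
   (true = twisted edge) *)
Definition rsys := prod {perm dart} {ffun gEd G -> bool}.

Definition valid_rs (r : rsys) : bool :=
  [forall d, dv (r.1 d) == dv d] &&
  [forall d, [forall d', (dv d == dv d') ==> fconnect (fun x => r.1 x) d d']].

(* flags (d, s): dart d, side s (true = the side between d and r.1 d) *)
Definition flag := (dart * bool)%type.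
Definition tau0 (r : rsys) (f : flag) : flag :=
  (dalpha f.1, if r.2 f.1.1 then f.2 else ~~ f.2).
Definition tau1 (f : flag) : flag := (f.1, ~~ f.2).
Definition tau2 (r : rsys) (f : flag) : flag :=
  if f.2 then (r.1 f.1, false) else ((r.1^-1)%g f.1, true).

Definition face_rel (r : rsys) : rel flag :=
  fun f g => (g == tau0 r f) || (g == tau2 r f).
Definition nfaces (r : rsys) : nat := n_comp (face_rel r) predT.

Definition euler_genus (r : rsys) : nat :=
  (2 + #|gEd G|) - (#|gV G| + nfaces r).

(* orientable surface iff the flag graph is bipartite *)
Definition orientable (r : rsys) : bool :=
  [exists c : {ffun flag -> bool}, [forall f,
     [&& c (tau0 r f) != c f, c (tau1 f) != c f & c (tau2 r f) != c f]]].

Definition switch_rel (S : {set gV G}) (r r' : rsys) : bool :=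
  [forall d, r'.1 d == (if dv d \in S then (r.1^-1)%g d else r.1 d)] &&
  [forall e, r'.2 e == r.2 e (+) (((gend e).1 \in S) != ((gend e).2 \in S))].
Definition rs_equiv (r r' : rsys) : bool := [exists S, switch_rel S r r'].

Definition num_emb (P : pred rsys) : nat :=
  #|[set [set y | valid_rs y && rs_equiv x y] | x in [pred x | valid_rs x && P x]]|.

Definition eps_ (i : nat) : nat := num_emb (fun r => euler_genus r == i).
Definition gam (k : nat) : nat :=
  num_emb (fun r => orientable r && (euler_genus r == k.*2)).
Definition gamt (j : nat) : nat :=
  num_emb (fun r => ~~ orientable r && (euler_genus r == j)).

(* all genera / Euler genera are < gbound, so these are the values at 1
   of the generating polynomials *)
Definition gbound : nat := #|gEd G| + 2.
Definition Eps1 : nat := \sum_(i < gbound) eps_ i.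
Definition Gamma1 : nat := \sum_(k < gbound) gam k.
Definition Gammat1 : nat := \sum_(j < gbound) gamt j.

End Embeddings.

Section Quotient.
Variables (G : graph) (R : rel (gV G)).
Definition qrel : rel (gV G) := fun x y => R x y || R y x.
Definition qcls (x : gV G) : {set gV G} := [set y | connect qrel x y].
Definition qV := {A : {set gV G} | [exists x, A == qcls x]}.
Lemma qcls_ok x : [exists y, qcls x == qcls y].
Proof. by apply/existsP; exists x. Qed.
Definition qproj (x : gV G) : qV := exist _ (qcls x) (qcls_ok x).
Definition quot : graph :=
  @Graph _ (gEd G) (fun e => (qproj (gend e).1, qproj (gend e).2)).
End Quotient.

(* H-linear family with spiders.  Lin_spider ... n is G^o_{n+1}:       *)
(* n+1 copies H_0..H_n of H, v_{j,i} identified with u_{j+1,i}, and     *)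
(* the root of spider (i,false) identified with u_{0,i}, the root of    *)
(* spider (i,true) identified with v_{n,i}.                             *)
Section Linear.
Variables (H : graph) (s : nat) (u v : 'I_s -> gV H)
          (sp : 'I_s * bool -> graph) (sr : forall k, gV (sp k)) (n : nat).

Definition cpV := ('I_n.+1 * gV H)%type.
Definition uV := (cpV + {k : 'I_s * bool & gV (sp k)})%type.
Definition uE := (('I_n.+1 * gEd H) + {k : 'I_s * bool & gEd (sp k)})%type.

Definition uend (e : uE) : uV * uV :=
  match e with
  | inl (j, e0) => (inl (j, (gend e0).1), inl (j, (gend e0).2))
  | inr (existT k e0) =>
      (inr (existT _ k (gend e0).1), inr (existT _ k (gend e0).2))
  end.

Definition apt (k : 'I_s * bool) : cpV :=
  if k.2 then (ord_max, v k.1) else (ord0, u k.1).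

Definition ident : rel uV := fun x y =>
  match x, y with
  | inl (j1, w1), inl (j2, w2) =>
      [exists i, [&& w1 == u i, w2 == v i & (j1 : nat) == j2.+1]]
  | inr (existT k r), inl p => (r == sr k) && (p == apt k)
  | _, _ => false
  end.

Definition union_graph : graph := @Graph uV uE uend.
Definition Lin_spider : graph := @quot union_graph ident.
End Linear.

Local Open Scope ring_scope.
Definition cdf_eg (R : realType) (G : graph) (x : R) : R :=
  \sum_(i < gbound G | (i : nat)%:R <= x) ((eps_ G i)%:R / (Eps1 G)%:R).
Definition cdf_cc (R : realType) (G : graph) (x : R) : R :=
  \sum_(i < gbound G | (i : nat)%:R <= x) ((gamt G i)%:R / (Gammat1 G)%:R).

From HB Require Import structures.
From mathcomp Require Import all_boot all_order all_algebra.
From mathcomp Require Import all_classical all_reals all_analysis.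
From mathcomp Require Import fingroup perm ring lra.
Import Order.TTheory GRing.Theory Num.Theory.

(* An orientable embedding has even Euler genus.  Colour the flags properly
   with two colours: every dart then carries exactly one flag of colour
   [true], and the colour-preserving maps tau2 tau1, tau0 tau1 and tau2 tau0
   induce on the darts the vertex rotation rho, the edge involution alpha and
   the face permutation phi, with rho = alpha phi.  When no vertex is isolated
   their cycles are the vertices, edges and faces, and there is an even number
   of darts, so comparing signs gives |V| = |E| + |F| (mod 2).  Hence
   gamt_i <= eps_i <= gamt_i + [i even] gam_(i/2), so the partial sums of the
   Euler-genus and crosscap-number distributions differ by at most
   Gamma(1)/E(1), which tends to 0 by hypothesis. *)

Set Implicit Arguments.
Unset Strict Implicit.
Unset Printing Implicit Defensive.

Lemma card_imset_eq_kernel (T A B : finType) (g : T -> A) (h : T -> B) :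
  (forall x y, (g x == g y) = (h x == h y)) ->
  #|[set g x | x : T]| = #|[set h x | x : T]|.
Proof.
move=> gh; set S := [set (g x, h x) | x : T].
have -> : [set g x | x : T] = fst @: S by rewrite -imset_comp.
have -> : [set h x | x : T] = snd @: S by rewrite -imset_comp.
have fst_inj : {in S &, injective fst}.
  move=> _ _ /imsetP[x _ ->] /imsetP[y _ ->] /= /eqP gxy.
  by move: (gxy); rewrite gh => /eqP ->; rewrite (eqP gxy).
have snd_inj : {in S &, injective snd}.
  move=> _ _ /imsetP[x _ ->] /imsetP[y _ ->] /= /eqP hxy.
  by move: (hxy); rewrite -gh => /eqP ->; rewrite (eqP hxy).
by rewrite (card_in_imset fst_inj) (card_in_imset snd_inj).
Qed.

Lemma fconnect_porbit (T : finType) (s : {perm T}) x y :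
  fconnect s x y = (y \in porbit s x).
Proof.
apply/idP/porbitP => [xy | [i ->]]; last by rewrite permX fconnect_iter.
by exists (findex s x y); rewrite permX iter_findex.
Qed.

Lemma porbit_stable (T : finType) (s : {perm T}) a x :
  x \in porbit s a -> s x \in porbit s a /\ (s^-1)%g x \in porbit s a.
Proof.
rewrite -eq_porbit_mem => /eqP <-; split.
  by have := mem_porbit s 1 x; rewrite expg1.
by have := mem_porbit (s^-1)%g 1 x; rewrite expg1 porbitV.
Qed.

Lemma odd_perm_dart (G : graph) (p : {perm dart G}) : odd_perm p = odd #|porbits p|.
Proof. by rewrite /odd_perm card_prod card_bool oddM andbF. Qed.

Definition no_isolated_vertex (G : graph) : Prop :=
  forall x : gV G, exists d : dart G, dv d = x.

Section NumEmb.
Variable G : graph.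
Implicit Types P Q : pred (rsys G).

Lemma leq_num_emb P Q :
  (forall r, valid_rs r -> P r -> Q r) -> (num_emb P <= num_emb Q)%N.
Proof.
move=> PQ; apply/subset_leq_card/fintype.subsetP => A /imsetP[r].
by rewrite inE => /andP[rv Pr] ->; apply/imsetP; exists r; rewrite // inE rv PQ.
Qed.

Lemma eq_num_emb P Q :
  (forall r, valid_rs r -> P r = Q r) -> num_emb P = num_emb Q.
Proof.
by move=> PQ; apply/eqP; rewrite eqn_leq !leq_num_emb // => r rv; rewrite PQ.
Qed.

Lemma leq_num_embU P Q : (num_emb (predU P Q) <= num_emb P + num_emb Q)%N.
Proof.
apply/(leq_trans _ (leq_card_setU _ _))/subset_leq_card/fintype.subsetP.
move=> A /imsetP[r]; rewrite !inE => /andP[rv /orP[Pr|Qr]] ->.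
- by apply/orP; left; apply/imsetP; exists r; rewrite // inE rv Pr.
- by apply/orP; right; apply/imsetP; exists r; rewrite // inE rv Qr.
Qed.

Lemma num_emb_pred0 P : (forall r, valid_rs r -> ~~ P r) -> num_emb P = 0%N.
Proof.
move=> nP; apply/eqP; rewrite cards_eq0; apply/eqP/setP => A; rewrite inE.
by apply/imsetP => -[r]; rewrite inE => /andP[rv]; rewrite (negbTE (nP r rv)).
Qed.

End NumEmb.

Section Flags.
Variables (G : graph) (r : rsys G).

Lemma tau0K : involutive (tau0 r).
Proof.
by case=> [[e b] t]; rewrite /tau0 /dalpha /= negbK; case: (r.2 e); rewrite /= ?negbK.
Qed.

Lemma tau1K : involutive (@tau1 G).
Proof. by case=> d t; rewrite /tau1 /= negbK. Qed.

Lemma tau2K : involutive (tau2 r).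
Proof. by case=> d [] /=; rewrite /tau2 /= ?permK ?permKV. Qed.

Lemma face_rel_sym : symmetric (face_rel r).
Proof.
move=> f g; rewrite /face_rel.
by congr (_ || _); apply/eqP/eqP => ->; rewrite ?tau0K ?tau2K.
Qed.

End Flags.

Section OrientableParity.
Variables (G : graph) (r : rsys G) (c : {ffun flag G -> bool}).
Hypothesis c_proper : forall f,
  [&& c (tau0 r f) != c f, c (tau1 f) != c f & c (tau2 r f) != c f].

Lemma c_tau0 f : c (tau0 r f) = ~~ c f.
Proof. by case/and3P: (c_proper f); case: (c (tau0 r f)); case: (c f). Qed.

Lemma c_tau1 f : c (tau1 f) = ~~ c f.
Proof. by case/and3P: (c_proper f); case: (c (tau1 f)); case: (c f). Qed.

Lemma c_tau2 f : c (tau2 r f) = ~~ c f.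
Proof. by case/and3P: (c_proper f); case: (c (tau2 r f)); case: (c f). Qed.

(* Adjacent flags have opposite colours, so [cflag d] is the unique flag of
   colour [true] on the dart [d]. *)
Definition cflag (d : dart G) : flag G := (d, c (d, true)).

Lemma c_cflag d : c (cflag d).
Proof.
rewrite /cflag; case cd: (c (d, true)) => //.
by have := c_tau1 (d, true); rewrite /tau1 /= cd.
Qed.

Lemma cflagE f : c f -> cflag f.1 = f.
Proof.
case: f => d [] cf; rewrite /cflag /= ?cf //.
by have := c_tau1 (d, false); rewrite /tau1 /= cf => ->.
Qed.

Section DartMap.
Variable T : flag G -> flag G.
Hypotheses (c_T : forall f, c (T f) = c f) (T_inj : injective T).

Definition dart_map (d : dart G) : dart G := (T (cflag d)).1.

Lemma cflag_dart_map d : cflag (dart_map d) = T (cflag d).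
Proof. by rewrite cflagE // c_T c_cflag. Qed.

Lemma dart_map_inj : injective dart_map.
Proof.
move=> d d' /(congr1 cflag); rewrite !cflag_dart_map.
by move=> /T_inj/(congr1 fst).
Qed.

End DartMap.

Definition vertex_step f := tau2 r (tau1 f).
Definition edge_step f := tau0 r (tau1 f).
Definition face_step f := tau2 r (tau0 r f).

Lemma c_vertex_step f : c (vertex_step f) = c f.
Proof. by rewrite c_tau2 c_tau1 negbK. Qed.
Lemma c_edge_step f : c (edge_step f) = c f.
Proof. by rewrite c_tau0 c_tau1 negbK. Qed.
Lemma c_face_step f : c (face_step f) = c f.
Proof. by rewrite c_tau2 c_tau0 negbK. Qed.

Lemma vertex_step_inj : injective vertex_step.
Proof. exact: inj_comp (inv_inj (tau2K r)) (inv_inj (@tau1K G)). Qed.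
Lemma edge_step_inj : injective edge_step.
Proof. exact: inj_comp (inv_inj (tau0K r)) (inv_inj (@tau1K G)). Qed.
Lemma face_step_inj : injective face_step.
Proof. exact: inj_comp (inv_inj (tau2K r)) (inv_inj (tau0K r)). Qed.

Definition vertex_perm : {perm dart G} :=
  perm (dart_map_inj c_vertex_step vertex_step_inj).
Definition edge_perm : {perm dart G} := perm (dart_map_inj c_edge_step edge_step_inj).
Definition face_perm : {perm dart G} := perm (dart_map_inj c_face_step face_step_inj).

Lemma vertex_permE d :
  vertex_perm d = if c (d, true) then (r.1^-1)%g d else r.1 d.
Proof.
by rewrite permE /dart_map /vertex_step /cflag /tau1 /tau2 /=; case: (c (d, true)).
Qed.

Lemma edge_permE d : edge_perm d = dalpha d.
Proof. by rewrite permE. Qed.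

Lemma cflag_face_perm d : cflag (face_perm d) = face_step (cflag d).
Proof. by rewrite permE cflag_dart_map //; exact: c_face_step. Qed.

Lemma vertex_perm_edge_face : vertex_perm = (edge_perm * face_perm)%g.
Proof.
apply/permP => d; rewrite permM.
suff /(congr1 fst) : cflag (vertex_perm d) = cflag (face_perm (edge_perm d)) by [].
rewrite cflag_face_perm !permE !cflag_dart_map;
  [|exact: c_edge_step|exact: c_vertex_step].
by rewrite /face_step /edge_step tau0K.
Qed.

Lemma card_porbits_edge_perm : #|porbits edge_perm| = #|gEd G|.
Proof.
have same_orbit x y : (porbit edge_perm x == porbit edge_perm y) = (x.1 == y.1).
  rewrite eq_porbit_mem; apply/porbitP/eqP.
    by case=> i ->; rewrite permX; elim: i => //= i <-; rewrite edge_permE.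
  case: x y => [e b] [e' b'] /= <-; have [<-|neq_bb'] := eqVneq b b'.
    by exists 0%N; rewrite expg0 perm1.
  by exists 1%N; rewrite expg1 edge_permE /dalpha; case: b b' neq_bb' => -[].
rewrite /porbits (card_imset_eq_kernel same_orbit) -cardsT.
by apply: eq_card => e; rewrite inE; apply/imsetP; exists (e, false).
Qed.

Lemma connect_face_rel_cflag a b :
  connect (face_rel r) (cflag a) (cflag b) = (b \in porbit face_perm a).
Proof.
apply/idP/idP.
- pose orbit_flag := [pred f | (if c f then f else tau0 r f).1 \in porbit face_perm a].
  have orbit_flag_closed : fingraph.closed (face_rel r) orbit_flag.
    apply: (intro_closed (sym_connect_sym (face_rel_sym r))).
    move=> f g /orP[]/eqP->; rewrite !inE ?c_tau0 ?c_tau2; case cf: (c f) => Hf.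
    + by rewrite tau0K.
    + by [].
    + have -> : f = tau2 r (tau0 r (cflag ((face_perm^-1)%g f.1))).
        by rewrite -[tau2 _ _]cflag_face_perm permKV cflagE.
      by rewrite tau2K tau0K; case: (porbit_stable Hf).
    + have -> : tau2 r f = cflag (face_perm (tau0 r f).1).
        by rewrite cflag_face_perm cflagE ?c_tau0 ?cf // /face_step tau0K.
      by case: (porbit_stable Hf).
  move/(closed_connect orbit_flag_closed); rewrite !inE !c_cflag.
  by rewrite porbit_id => /esym.
- case/porbitP => i ->; elim: i => [|i IH]; first by rewrite expg0 perm1.
  rewrite expgSr permM cflag_face_perm; apply: connect_trans IH _.
  apply: (connect_trans (y := tau0 r (cflag ((face_perm ^+ i)%g a)))).
    by apply: connect1; rewrite /face_rel eqxx.
  by apply: connect1; rewrite /face_rel eqxx orbT.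
Qed.

Lemma card_porbits_face_perm : #|porbits face_perm| = nfaces r.
Proof.
have face_sym := sym_connect_sym (face_rel_sym r).
rewrite /nfaces /n_comp_mem.
have -> : #|predI (roots (face_rel r)) (mem predT)|
        = #|[set fingraph.root (face_rel r) (cflag d) | d : dart G]|.
  apply: eq_card => f; rewrite !inE andbT; apply/idP/imsetP.
  - move/eqP => <-; case cf: (c f).
      by exists f.1; rewrite ?cflagE.
    exists (tau0 r f).1; rewrite // cflagE ?c_tau0 ?cf //.
    by apply/eqP; rewrite (root_connect face_sym) connect1 // /face_rel eqxx.
  - by case=> d _ ->; rewrite /roots /= (root_root face_sym).
rewrite /porbits; symmetry; apply: card_imset_eq_kernel => x y.
by rewrite (root_connect face_sym) face_sym connect_face_rel_cflag eq_porbit_mem.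
Qed.

Lemma c_vertex_perm d : c (vertex_perm d, true) = c (d, true).
Proof.
have := congr1 snd (cflag_dart_map c_vertex_step d).
by rewrite permE /cflag /vertex_step /tau1 /tau2 /=; case: (c (d, true)).
Qed.

Lemma porbit_vertex_perm d : porbit vertex_perm d = porbit r.1 d.
Proof.
pose q := (if c (d, true) then r.1^-1 else r.1)%g.
have iter_vertex_perm i :
    (vertex_perm ^+ i)%g d = (q ^+ i)%g d /\ c ((q ^+ i)%g d, true) = c (d, true).
  elim: i => [|i [IHi cqi]]; first by rewrite !expg0 !perm1.
  have step : vertex_perm ((q ^+ i)%g d) = q ((q ^+ i)%g d).
    by rewrite vertex_permE cqi /q; case: (c (d, true)).
  by rewrite !expgSr !permM IHi step -step c_vertex_perm cqi.
have -> : porbit vertex_perm d = porbit q d.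
  apply/setP => x; apply/porbitP/porbitP => -[i ->]; exists i;
    by case: (iter_vertex_perm i).
by rewrite /q; case: (c (d, true)); rewrite ?porbitV.
Qed.

Section Vertices.
Hypotheses (r_valid : valid_rs r) (G_no_isolated : no_isolated_vertex G).

Lemma dv_r1 d : dv (r.1 d) = dv d.
Proof. by case/andP: r_valid => /forallP/(_ d)/eqP. Qed.

Lemma card_porbits_vertex_perm : #|porbits vertex_perm| = #|gV G|.
Proof.
have same_orbit x y : (porbit vertex_perm x == porbit vertex_perm y) = (dv x == dv y).
  rewrite eq_porbit_mem porbit_vertex_perm; apply/idP/eqP => [/porbitP[i ->]|xy].
    by rewrite permX; elim: i => //= i <-; rewrite dv_r1.
  rewrite -fconnect_porbit.
  by case/andP: r_valid => _ /forallP/(_ y)/forallP/(_ x)/implyP; apply; rewrite xy.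
rewrite /porbits (card_imset_eq_kernel same_orbit) -cardsT.
apply: eq_card => x; rewrite inE; apply/imsetP.
by case: (G_no_isolated x) => d <-; exists d.
Qed.

Lemma odd_card_vertices : odd #|gV G| = odd #|gEd G| (+) odd (nfaces r).
Proof.
rewrite -card_porbits_vertex_perm -card_porbits_edge_perm -card_porbits_face_perm.
by rewrite -!odd_perm_dart vertex_perm_edge_face odd_permM.
Qed.

Lemma euler_genus_even : ~~ odd (euler_genus r).
Proof.
rewrite /euler_genus; have [le_VF|/ltnW] := leqP (#|gV G| + nfaces r) (2 + #|gEd G|).
  by rewrite oddB // !oddD odd_card_vertices /=; case: odd; case: odd.
(* the truncated subtraction vanishes *)
by rewrite -subn_eq0 => /eqP ->.
Qed.

End Vertices.
End OrientableParity.

Lemma orientable_euler_genus_even (G : graph) (r : rsys G) :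
  no_isolated_vertex G -> valid_rs r -> orientable r -> ~~ odd (euler_genus r).
Proof.
move=> G_no_isolated r_valid /existsP[c /forallP c_proper].
exact: euler_genus_even c_proper r_valid G_no_isolated.
Qed.

Section EmbeddingCounts.
Variable G : graph.

Lemma gamt_le_eps i : (gamt G i <= eps_ G i)%N.
Proof. by apply: leq_num_emb => r _ /andP[_ ->]. Qed.

Definition gam_euler (i : nat) : nat := if odd i then 0 else gam G i./2.

Lemma sum_gam_euler n : (\sum_(i < n) gam_euler i <= \sum_(k < n) gam G k)%N.
Proof.
have sum_double m : \sum_(i < m.*2) gam_euler i = \sum_(k < m) gam G k.
  elim: m => [|m IHm]; first by rewrite !big_ord0.
  rewrite doubleS !big_ord_recr /= IHm /gam_euler /= odd_double doubleK.
  by rewrite addn0.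
rewrite -sum_double -!(big_mkord xpredT) -addnn (big_cat_nat _ (leq_addr n n)) //=.
exact: leq_addr.
Qed.

Hypothesis G_no_isolated : no_isolated_vertex G.

Lemma eps_le_gamt_gam_euler i : (eps_ G i <= gamt G i + gam_euler i)%N.
Proof.
pose or_eg (r : rsys G) := orientable r && (euler_genus r == i).
pose nor_eg (r : rsys G) := ~~ orientable r && (euler_genus r == i).
rewrite /eps_ (@eq_num_emb _ _ (predU or_eg nor_eg)); last first.
  by move=> r _; rewrite /or_eg /nor_eg /=; case: (orientable r); rewrite ?orbF.
rewrite addnC; apply: (leq_trans (leq_num_embU _ _)); rewrite leq_add2r /gam_euler.
case: ifP => [odd_i|even_i].
  rewrite num_emb_pred0 // => r r_valid; apply/andP => -[r_or /eqP egr].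
  by move: (orientable_euler_genus_even G_no_isolated r_valid r_or); rewrite egr odd_i.
apply: leq_num_emb => r _ /andP[-> /eqP ->] /=.
by rewrite -{1}(odd_double_half i) even_i.
Qed.

Lemma leq_partial_eps (P : pred 'I_(gbound G)) :
  (\sum_(i < gbound G | P i) eps_ G i
     <= \sum_(i < gbound G | P i) gamt G i + Gamma1 G)%N.
Proof.
apply: (@leq_trans (\sum_(i < gbound G | P i) (gamt G i + gam_euler i))).
  by apply: leq_sum => i _; exact: eps_le_gamt_gam_euler.
rewrite big_split leq_add2l /=; apply: leq_trans (sum_gam_euler _).
by rewrite [X in (_ <= X)%N](bigID P) leq_addr.
Qed.

End EmbeddingCounts.

Local Open Scope ring_scope.

Lemma dist_ratio_le (R : realFieldType) (a b e t g : R) :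
  0 <= b -> b <= a <= b + g -> b <= t -> t <= e <= t + g ->
  `|a / e - b / t| <= g / e.
Proof.
move=> b_ge0 /andP[le_ba le_agb] le_bt /andP[le_te le_etg].
have e_ge0 : 0 <= e by lra.
have [t_le0|tpos] := lerP t 0.
  have -> : t = 0 by lra.
  have -> : b = 0 by lra.
  rewrite invr0 mulr0 subr0 ger0_norm ?divr_ge0 //; last by lra.
  by apply: ler_wpM2r; rewrite ?invr_ge0 //; lra.
have epos : 0 < e by lra.
have -> : a / e - b / t = (a * t - b * e) / (e * t) by field; rewrite ?gt_eqF.
have etpos : 0 < e * t by rewrite mulr_gt0.
rewrite normrM normfV (gtr0_norm etpos) ler_pdivrMr //.
have -> : g / e * (e * t) = g * t by field; rewrite gt_eqF.
by rewrite ler_norml; apply/andP; split; nra.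
Qed.

Lemma cdf_eg_cc_dist (R : realType) (G : graph) (x : R) :
  no_isolated_vertex G ->
  `|cdf_eg G x - cdf_cc G x| <= (Gamma1 G)%:R / (Eps1 G)%:R.
Proof.
move=> G_no_isolated; rewrite /cdf_eg /cdf_cc -!mulr_suml -!natr_sum.
have gamt_eps (Q : pred 'I_(gbound G)) :
    (\sum_(i < gbound G | Q i) gamt G i <= \sum_(i < gbound G | Q i) eps_ G i)%N.
  by apply: leq_sum => i _; exact: gamt_le_eps.
apply: dist_ratio_le; rewrite ?ler0n ?ler_nat -?natrD ?ler_nat ?gamt_eps //=.
- exact: leq_partial_eps.
- by rewrite /Gammat1 [X in (_ <= X)%N](bigID (fun i : 'I__ => i%:R <= x)) leq_addr.
- exact: leq_partial_eps G_no_isolated xpredT.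
Qed.

Lemma connect_gadj_dart (K : graph) (w w' : gV K) :
  w != w' -> connect (@gadj K) w w' -> exists d : dart K, dv d = w.
Proof.
move=> ne /connectP[[|y p] /= wp w'E]; first by rewrite w'E eqxx in ne.
case/andP: wp => /existsP[e /orP[]/eqP ewy] _.
- by exists (e, false); rewrite /dv ewy.
- by exists (e, true); rewrite /dv ewy.
Qed.

Lemma gconnected_no_isolated (K : graph) (w1 w2 : gV K) :
  w1 != w2 -> gconnected K -> no_isolated_vertex K.
Proof.
move=> w12 K_connected x.
apply: (connect_gadj_dart _ (K_connected x (if x == w1 then w2 else w1))).
by case: (eqVneq x w1) => [->|].
Qed.

Lemma quot_no_isolated (G : graph) (R : rel (gV G)) :
  (forall x, exists2 y, connect (qrel R) x y & exists d : dart G, dv d = y) ->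
  no_isolated_vertex (quot R).
Proof.
move=> near_dart [A A_cls]; have [x /eqP Ax] := existsP A_cls.
have [y xy [d dy]] := near_dart x.
have qrel_sym : symmetric (qrel R) by move=> z z'; rewrite /qrel orbC.
have dv_quot : val (@dv (quot R) d) = qcls R (dv d) by rewrite /dv; case: d.2.
exists d; apply: val_inj; rewrite dv_quot /= Ax dy; apply/setP => z; rewrite !inE.
by rewrite (same_connect (sym_connect_sym qrel_sym) xy).
Qed.

Section LinearFamily.
Variables (H : graph) (s : nat) (u v : 'I_s -> gV H)
          (sp : 'I_s * bool -> graph) (sr : forall k, gV (sp k)) (n : nat).
Hypotheses (s_gt0 : (0 < s)%N) (H_connected : gconnected H).
Hypothesis u_neq_v : forall i j, u i != v j.
Hypothesis sp_connected : forall k, gconnected (sp k).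

Lemma union_graph_dart_copy (p : cpV H n) :
  exists d : dart (union_graph H sp n), dv d = inl p.
Proof.
case: p => j w; pose i0 := Ordinal s_gt0.
have [[e b] <-] := gconnected_no_isolated (u_neq_v i0 i0) H_connected w.
by exists (inl (j, e), b); case: b.
Qed.

Lemma Lin_spider_no_isolated : no_isolated_vertex (Lin_spider u v sr n).
Proof.
apply: quot_no_isolated => -[p|[k w]].
  by exists (inl p) => //; exact: union_graph_dart_copy.
have [->|ne] := eqVneq w (sr k).
  exists (inl (apt u v n k)); last exact: union_graph_dart_copy.
  by apply: connect1; rewrite /qrel /= !eqxx.
exists (inr (existT _ k w)) => //.
have [[e b] <-] := connect_gadj_dart ne (sp_connected w (sr k)).
by exists (inr (existT _ k e), b); case: b.
Qed.

End LinearFamily.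

Local Open Scope classical_set_scope.

Lemma sup_norm_image_le (R : realType) (T : Type) (f : T -> R) (b : R) :
  [set: T] !=set0 -> (forall x, `|f x| <= b) ->
  0 <= sup [set `|f x| | x in [set: T]] <= b.
Proof.
move=> [x0 _] f_le; apply/andP; split.
  apply: le_trans (normr_ge0 (f x0)) _; apply: ub_le_sup; last by exists x0.
  by exists b => _ [x _ <-].
by apply: ge_sup; [exists `|f x0|, x0 | move=> _ [x _ <-]].
Qed.

Theorem mainTheorem4 (R : realType) (H : graph) (s : nat) (u v : 'I_s -> gV H)
  (sp : 'I_s * bool -> graph) (sr : forall k, gV (sp k)) :
  (0 < s)%N -> gconnected H -> injective u -> injective v ->
  (forall i j, u i != v j) -> (forall k, gconnected (sp k)) ->
  (fun n => (Gamma1 (Lin_spider u v sr n))%:R / (Eps1 (Lin_spider u v sr n))%:R : R)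
     @ \oo --> 0 ->
  (fun n => sup [set `| cdf_eg (Lin_spider u v sr n) x - cdf_cc (Lin_spider u v sr n) x |
                 | x in [set: R]]) @ \oo --> 0.
Proof.
move=> s_gt0 H_connected _ _ u_neq_v sp_connected ratio_cvg0.
have cvg0 : (fun _ : nat => 0 : R) @ \oo --> 0.
  by apply/cvgrPdist_lt => e e_gt0; apply: nearW => n; rewrite subrr normr0.
apply: (squeeze_cvgr _ cvg0 ratio_cvg0); apply: nearW => n.
apply: sup_norm_image_le; first by exists 0.
by move=> x; apply/cdf_eg_cc_dist/Lin_spider_no_isolated.
Qed.
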